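(* Let $(G,w)$ be a weighted undirected graph and let $G^{\#}$ denote its group inverse graph. (a) If $G$ is connected, then $G^{\#}$ is connected. (b) If $G$ is bipartite, then $G^{\#}$ is bipartite.
   Context: A weighted undirected graph $(G,w)$ on vertices $v_1,\dots,v_n$ assigns a nonzero real weight $w(v_iv_j)$ to each edge; its adjacency matrix $A$ is the $n\times n$ real symmetric matrix with $a_{ij}=w(v_iv_j)$ if $v_iv_j$ is an edge and $a_{ij}=0$ otherwise. The group inverse $A^{\#}$ of a square matrix $A$ is the unique matrix $X$ with $AXA=A$, $XAX=X$, $AX=XA$ (it exists for real symmetric $A$). The group inverse graph $G^{\#}$ has the same vertex set as $G$, with $v_iv_j$ an edge iff the $(i,j)$ entry of $A^{\#}$ is nonzero, the weight of that edge being that entry. *)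

From HB Require Import structures.
From mathcomp Require Import all_boot all_order all_algebra.
From mathcomp Require Import reals.
Set Implicit Arguments. Unset Strict Implicit. Unset Printing Implicit Defensive.
Import Order.TTheory GRing.Theory Num.Theory.
Local Open Scope ring_scope.

(* A weighted undirected graph on vertices 'I_n is represented by its
   (weighted) adjacency matrix A : real symmetric with zero diagonal;
   v_i v_j is an edge iff A i j != 0, with weight A i j. *)
Definition weighted_adj (R : realType) (n : nat) (A : 'M[R]_n) : Prop :=
  A^T = A /\ (forall i, A i i = 0).

Definition is_group_inverse (R : realType) (n : nat) (A X : 'M[R]_n) : Prop :=
  [/\ A *m X *m A = A, X *m A *m X = X & A *m X = X *m A].

(* The graph of a matrix: v_i v_j is an edge iff M i j != 0
   (a nonzero diagonal entry is a loop). *)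
Definition mx_edge (R : realType) (n : nat) (M : 'M[R]_n) : rel 'I_n :=
  fun i j => M i j != 0.

Definition mx_connected (R : realType) (n : nat) (M : 'M[R]_n) : Prop :=
  forall i j : 'I_n, connect (mx_edge M) i j.

Definition mx_bipartite (R : realType) (n : nat) (M : 'M[R]_n) : Prop :=
  exists c : 'I_n -> bool, forall i j : 'I_n, mx_edge M i j -> c i != c j.

(* The group inverse X of A commutes with every matrix commuting with A and
   anticommutes with every matrix anticommuting with A (Drazin), and A is in
   turn the group inverse of X.  A set S of vertices is closed under the edges
   of M exactly when the diagonal 0/1 indicator matrix of S commutes with M, and
   a colouring c is proper for M exactly when the diagonal +-1 matrix of c
   anticommutes with M.  So a proper 2-colouring of A is one of X; and since X
   is symmetric, the component of a vertex in the graph of X is closed under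
   the edges of X, hence of A, hence contains every vertex when A is connected. *)
From HB Require Import structures.
From mathcomp Require Import all_boot all_order all_algebra.
From mathcomp Require Import reals.
Set Implicit Arguments. Unset Strict Implicit. Unset Printing Implicit Defensive.
Local Open Scope ring_scope.
Import GRing.Theory Num.Theory.

Section GroupInverse.
Variables (R : realType) (n : nat).
Implicit Types A X Y B : 'M[R]_n.

Lemma group_inverse_uniq A X Y :
  is_group_inverse A X -> is_group_inverse A Y -> X = Y.
Proof.
case=> AXA XAX AX_XA [AYA YAY AY_YA].
have AXY : A *m X = A *m Y.
  by rewrite -{1}AYA -mulmxA AX_XA AY_YA -mulmxA (mulmxA A) AXA.
by rewrite -XAX -mulmxA AXY mulmxA -AX_XA AXY AY_YA YAY.
Qed.

Lemma group_inverse_swap A X : is_group_inverse A X -> is_group_inverse X A.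
Proof. by case. Qed.

Lemma group_inverse_opp A X :
  is_group_inverse A X -> is_group_inverse (- A) (- X).
Proof.
by case=> AXA XAX AX_XA; split; rewrite !(mulNmx, mulmxN, opprK) ?AXA ?XAX ?AX_XA.
Qed.

Lemma group_inverse_tr A X :
  is_group_inverse A X -> is_group_inverse A^T X^T.
Proof. by case=> AXA XAX AX_XA; split; rewrite -!trmx_mul ?mulmxA ?AXA ?XAX ?AX_XA. Qed.

Lemma group_inverse_symmetric A X : A^T = A -> is_group_inverse A X -> X^T = X.
Proof.
move=> symA gX; apply: group_inverse_uniq (gX).
by rewrite -symA; exact: group_inverse_tr.
Qed.

(* Drazin's argument: with E = A X and E' = A' X', one has X' B = X' B E
   and B X = E' B X, while X' B E = X' A' B X = E' B X. *)
Lemma group_inverse_intertwine A A' X X' B :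
  is_group_inverse A X -> is_group_inverse A' X' ->
  B *m A = A' *m B -> B *m X = X' *m B.
Proof.
case=> AXA XAX AX_XA [A'X'A' X'A'X' A'X'_X'A'] BA.
have X'B_E : X' *m B *m (X *m A) = X' *m B.
  have X'B : X' *m B = X' *m X' *m B *m A.
    by rewrite -{1}X'A'X' -(mulmxA X') A'X'_X'A' -!mulmxA BA.
  by rewrite X'B -!mulmxA (mulmxA A) AXA.
have E'_BX : A' *m X' *m (B *m X) = B *m X.
  have BX : B *m X = A' *m B *m X *m X.
    by rewrite -{1}XAX -AX_XA !mulmxA BA.
  by rewrite BX !mulmxA A'X'A'.
rewrite -X'B_E -E'_BX -AX_XA !mulmxA -(mulmxA X' B A) BA mulmxA.
by rewrite A'X'_X'A'.
Qed.

Lemma group_inverse_commute A X B :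
  is_group_inverse A X -> B *m A = A *m B -> B *m X = X *m B.
Proof. by move=> gX; apply: (group_inverse_intertwine gX gX). Qed.

Lemma group_inverse_anticommute A X B :
  is_group_inverse A X -> B *m A = - (A *m B) -> B *m X = - (X *m B).
Proof.
move=> gX BA; rewrite -mulNmx.
by apply: (group_inverse_intertwine gX (group_inverse_opp gX)); rewrite mulNmx.
Qed.

End GroupInverse.

Section GraphMatrices.
Variables (R : realType) (n : nat).
Implicit Types A X M : 'M[R]_n.

Definition indicator_mx (S : pred 'I_n) : 'M[R]_n := diag_mx (\row_k (S k)%:R).

Definition sign_mx (c : 'I_n -> bool) : 'M[R]_n := diag_mx (\row_k (-1) ^+ c k).

Lemma indicator_mx_commute S M :
  indicator_mx S *m M = M *m indicator_mx S <-> closed (mx_edge M) S.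
Proof.
split=> [/matrixP PM x y Mxy | clS].
  change (S x = S y); have := PM x y; rewrite mul_diag_mx mul_mx_diag !mxE.
  by case: (S x) (S y) => [] [] //=; rewrite ?mul1r ?mulr1 ?mul0r ?mulr0;
    [move=> Mxy0 | move=> /esym Mxy0]; move: Mxy; rewrite /mx_edge Mxy0 eqxx.
apply/matrixP=> x y; rewrite mul_diag_mx mul_mx_diag !mxE.
have [->|Mxy] := eqVneq (M x y) 0; first by rewrite mulr0 mul0r.
by have /= -> : S x = S y := clS x y Mxy; rewrite mulrC.
Qed.

Lemma sign_mx_anticommute c M :
  sign_mx c *m M = - (M *m sign_mx c) <->
  forall x y, mx_edge M x y -> c x != c y.
Proof.
split=> [/matrixP SM x y Mxy | proper_c].
  apply: contra Mxy => /eqP cxy; have := SM x y.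
  rewrite mul_diag_mx mul_mx_diag !mxE cxy.
  case: (c y); rewrite ?expr1 ?expr0 ?mulN1r ?mulrN1 ?mul1r ?mulr1 ?opprK => /eqP.
    by rewrite eqNr.
  by rewrite eq_sym eqNr.
apply/matrixP=> x y; rewrite mul_diag_mx mul_mx_diag !mxE.
have [->|Mxy] := eqVneq (M x y) 0; first by rewrite mulr0 mul0r oppr0.
by move: (proper_c x y Mxy); case: (c x) (c y) => [] [] //= _;
  rewrite ?expr1 ?expr0 ?mulN1r ?mulrN1 ?mul1r ?mulr1 ?opprK.
Qed.

Lemma mx_edge_sym M : M^T = M -> symmetric (mx_edge M).
Proof. by move=> symM x y; rewrite /mx_edge -{1}symM mxE. Qed.

Lemma group_inverse_closed A X (S : pred 'I_n) :
  is_group_inverse A X -> closed (mx_edge A) S -> closed (mx_edge X) S.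
Proof.
move=> gX /indicator_mx_commute clA; apply/indicator_mx_commute.
exact: group_inverse_commute gX clA.
Qed.

Lemma group_inverse_connected A X : A^T = A -> is_group_inverse A X ->
  mx_connected A -> mx_connected X.
Proof.
move=> symA gX connA i j.
have connX_sym := sym_connect_sym (mx_edge_sym (group_inverse_symmetric symA gX)).
pose S := connect (mx_edge X) i.
have clS : closed (mx_edge A) S.
  exact: group_inverse_closed (group_inverse_swap gX) (connect_closed connX_sym i).
have := closed_connect clS (connA i j).
by rewrite !inE /S connect0.
Qed.

Lemma group_inverse_bipartite A X :
  is_group_inverse A X -> mx_bipartite A -> mx_bipartite X.
Proof.
move=> gX [c /sign_mx_anticommute proper_c]; exists c.
exact/sign_mx_anticommute/(group_inverse_anticommute gX).
Qed.

End GraphMatrices.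

Theorem proposition2p1 (R : realType) (n : nat) (A Ag : 'M[R]_n) :
  weighted_adj A -> is_group_inverse A Ag ->
  (mx_connected A -> mx_connected Ag) /\ (mx_bipartite A -> mx_bipartite Ag).
Proof.
move=> [symA _] gAg; split.
  exact: group_inverse_connected symA gAg.
exact: group_inverse_bipartite gAg.
Qed.
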